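(* In the two-state model with $\delta(t)=\tfrac12e^{-t}+\tfrac12e^{-2t}$, $g_1(a)=-a^2$, and $g_2(b)=\frac{193}{144}+\frac56b$ for $b<\frac7{12}$, $g_2(b)=2-(1-b)^2$ for $b\ge\frac7{12}$: (i) $Q^*\sim(5/12,7/12)$ is a weak equilibrium but not a strong equilibrium; indeed, for every $b\in[0,7/12)$ and $Q\sim(5/12,b)$, one has $F(2,Q^* )<F(2,Q\otimes_\varepsilon Q^* )$ for all sufficiently small $\varepsilon>0$. (ii) The equation $2a=\frac12\big(\frac1{1+a}+\frac1{2+a}\big)\big(a^2+\frac{193}{144}\big)$ has a unique solution $\bar a\in[0,\infty)$, it satisfies $2\bar a\ge\frac56$, and $\bar Q^*\sim(\bar a,0)$ is a strong equilibrium.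
   Context: Two-state model: $S=\{1,2\}$, admissible rows unrestricted ($D_i=E_i$), so every admissible generator has the form $Q=\begin{pmatrix}-a&a\\ b&-b\end{pmatrix}$ with $a,b\ge0$, written $Q\sim(a,b)$. The payoff is $f(t,1,(-a,a))=\delta(t)g_1(a)$ and $f(t,2,(b,-b))=\delta(t)g_2(b)$. $X$ is a continuous-time Markov chain with generator $Q$; $F(i,Q)=\mathbb E_{i,Q}[\int_0^\infty f(t,X_t,Q_{X_t})dt]$. $Q\otimes_\varepsilon Q'$: generator $Q$ on $[0,\varepsilon]$, then $Q'$ on $(\varepsilon,\infty)$, with expected payoff $F(i,Q\otimes_\varepsilon Q')$. $Q^*$ is a weak equilibrium if $\liminf_{\varepsilon\downarrow0}\varepsilon^{-1}(F(i,Q^* )-F(i,Q\otimes_\varepsilon Q^* ))\ge0$ for all admissible $Q$ and $i\in S$; a strong equilibrium if for every $i,Q$ there is $\varepsilon>0$ with $F(i,Q^* )\ge F(i,Q\otimes_{\varepsilon'}Q^* )$ for all $0<\varepsilon'\le\varepsilon$. *)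

From Stdlib Require Import Reals Lra ClassicalEpsilon.
Open Scope R_scope.

Inductive state := st1 | st2.

(* Admissible generator Q ~ (a,b):  Q = [[-a, a],[b, -b]],  a,b >= 0. *)
Record gen := mkGen { ga : R; gb : R }.
Definition admissible (Q : gen) : Prop := 0 <= ga Q /\ 0 <= gb Q.

(* Transition probabilities P_{ij}(t) = (exp (t Q))_{ij} of the
   time-homogeneous chain with generator Q ~ (a,b), written in closed form
   (s = a + b; if s = 0 the chain is constant). *)
Definition trans (Q : gen) (i j : state) (t : R) : R :=
  let a := ga Q in let b := gb Q in let s := a + b in
  if Req_EM_T s 0 then
    match i, j with st1, st1 => 1 | st2, st2 => 1 | _, _ => 0 end
  else
    match i, j with
    | st1, st1 => b / s + a / s * exp (- (s * t))
    | st1, st2 => a / s - a / s * exp (- (s * t))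
    | st2, st2 => a / s + b / s * exp (- (s * t))
    | st2, st1 => b / s - b / s * exp (- (s * t))
    end.

Definition payoff (delta g1 g2 : R -> R) (Q : gen) (j : state) (t : R) : R :=
  match j with
  | st1 => delta t * g1 (ga Q)
  | st2 => delta t * g2 (gb Q)
  end.

Definition has_integral (f : R -> R) (a b v : R) : Prop :=
  exists pr : Riemann_integrable f a b, RiemannInt pr = v.

Definition has_improper_integral (f : R -> R) (a v : R) : Prop :=
  forall eta, 0 < eta -> exists M, forall T, M <= T -> a <= T ->
    exists pr : Riemann_integrable f a T, Rabs (RiemannInt pr - v) < eta.

Definition integral (f : R -> R) (a b : R) : R :=
  epsilon (inhabits 0) (fun v => has_integral f a b v).

Definition improper_integral (f : R -> R) (a : R) : R :=
  epsilon (inhabits 0) (fun v => has_improper_integral f a v).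

(* F(i,Q) = E_{i,Q}[ int_0^infty f(t, X_t, Q_{X_t}) dt ]
          = int_0^infty sum_j P_{ij}(t) f(t, j, Q_j) dt *)
Definition F (delta g1 g2 : R -> R) (i : state) (Q : gen) : R :=
  improper_integral
    (fun t => trans Q i st1 t * payoff delta g1 g2 Q st1 t
            + trans Q i st2 t * payoff delta g1 g2 Q st2 t) 0.

(* F(i, Q (x)_eps Q2): generator Q on [0,eps], then Q2 on (eps,infty). *)
Definition Fconcat (delta g1 g2 : R -> R) (i : state) (Q : gen) (eps : R)
    (Q' : gen) : R :=
  integral
    (fun t => trans Q i st1 t * payoff delta g1 g2 Q st1 t
            + trans Q i st2 t * payoff delta g1 g2 Q st2 t) 0 eps
  + improper_integral
    (fun t => (trans Q i st1 eps * trans Q' st1 st1 (t - eps)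
               + trans Q i st2 eps * trans Q' st2 st1 (t - eps))
              * payoff delta g1 g2 Q' st1 t
            + (trans Q i st1 eps * trans Q' st1 st2 (t - eps)
               + trans Q i st2 eps * trans Q' st2 st2 (t - eps))
              * payoff delta g1 g2 Q' st2 t) eps.

Definition weak_equilibrium (delta g1 g2 : R -> R) (Qs : gen) : Prop :=
  admissible Qs /\
  forall (Q : gen) (i : state), admissible Q ->
    forall eta, 0 < eta -> exists e0, 0 < e0 /\ forall eps, 0 < eps < e0 ->
      (F delta g1 g2 i Qs - Fconcat delta g1 g2 i Q eps Qs) / eps >= - eta.

Definition strong_equilibrium (delta g1 g2 : R -> R) (Qs : gen) : Prop :=
  admissible Qs /\
  forall (Q : gen) (i : state), admissible Q ->
    exists e, 0 < e /\ forall e', 0 < e' <= e ->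
      F delta g1 g2 i Qs >= Fconcat delta g1 g2 i Q e' Qs.

Definition delta13 (t : R) : R := / 2 * exp (- t) + / 2 * exp (- (2 * t)).
Definition g1_13 (a : R) : R := - a ^ 2.
Definition g2_13 (b : R) : R :=
  if Rlt_dec b (7 / 12) then 193 / 144 + 5 / 6 * b else 2 - (1 - b) ^ 2.

(* After the switch time e the chain follows Q* = (A,B), and since delta is a sum of two
   exponentials its payoff from state k at time e has a closed form W_k(e).  Hence
   Fconcat - F is an explicit function Psi(e) with Psi(0) = 0 and
   Psi'(e) = sum_k P_ik(e) r_k(e), where r_k is the rate at which playing row k of Q instead
   of row k of Q* gains against W.  By the mean value theorem only the sign of r_k near 0
   matters.  For Q = (a, b) against Q* = (5/12, 7/12): r_1(0) = -(a - 5/12)^2, and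
   r_2(0) <= 0 because the linear branch of g2 is tangent to the quadratic one at 7/12, so
   Q* is weak; but for Q = (5/12, b), b < 7/12, r_1 = 0 and
   r_2(x) = (7/12 - b)(e^-x - e^-2x)/12 > 0 for x > 0, so Q* is not strong.
   For (abar, 0): r_1(0) = -(a - abar)^2 by the defining equation of abar, and r_2 <= 0 for
   all times because 2 abar >= 5/6, so (abar, 0) is strong; abar is the unique nonnegative
   root of an increasing cubic. *)
From Stdlib Require Import Reals Lra ClassicalEpsilon FunctionalExtensionality.
From Coquelicot Require Import Coquelicot.
Open Scope R_scope.

Lemma integral_RInt (h : R -> R) a b :
  (forall t, continuous h t) -> integral h a b = RInt h a b.
Proof.
  intros Hc.
  assert (Hex : ex_RInt h a b)
    by (apply (@ex_RInt_continuous R_CompleteNormedModule); intros; apply Hc).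
  assert (HH : has_integral h a b (RInt h a b)).
  { exists (ex_RInt_Reals_0 _ _ _ Hex). symmetry. apply RInt_Reals. }
  unfold integral.
  destruct (epsilon_spec (inhabits 0) (fun v => has_integral h a b v) (ex_intro _ _ HH))
    as [pr <-].
  symmetry. apply RInt_Reals.
Qed.

Lemma has_improper_integral_unique f a v w :
  has_improper_integral f a v -> has_improper_integral f a w -> v = w.
Proof.
  intros Hv Hw. destruct (Req_dec v w) as [|Hne]; [assumption|exfalso].
  assert (He : 0 < Rabs (v - w) / 2).
  { assert (0 < Rabs (v - w)) by (apply Rabs_pos_lt; lra). lra. }
  destruct (Hv _ He) as [M1 HM1]. destruct (Hw _ He) as [M2 HM2].
  set (T := Rmax (Rmax M1 M2) a).
  assert (h1 : M1 <= T) by (unfold T; eapply Rle_trans; [apply Rmax_l|apply Rmax_l]).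
  assert (h2 : M2 <= T) by (unfold T; eapply Rle_trans; [apply Rmax_r|apply Rmax_l]).
  assert (h3 : a <= T) by (unfold T; apply Rmax_r).
  destruct (HM1 T h1 h3) as [p1 H1]. destruct (HM2 T h2 h3) as [p2 H2].
  rewrite (RiemannInt_P5 p1 p2) in H1.
  assert (Rabs (v - w) <= Rabs (RiemannInt p2 - v) + Rabs (RiemannInt p2 - w)).
  { replace (v - w) with (-(RiemannInt p2 - v) + (RiemannInt p2 - w)) by ring.
    eapply Rle_trans; [apply Rabs_triang|]. rewrite Rabs_Ropp. lra. }
  lra.
Qed.

Lemma exp_neg_eventually_lt K eta :
  0 < eta -> exists M, forall T, M <= T -> K * exp (- T) < eta.
Proof.
  intros Heta. set (K' := Rmax K 0).
  exists (ln ((K' + 1) / eta)). intros T HT.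
  assert (HK' : K <= K' /\ 0 <= K') by (split; [apply Rmax_l|apply Rmax_r]).
  assert (Hexp : exp (- T) <= eta / (K' + 1)).
  { replace (eta / (K' + 1)) with (exp (- ln ((K' + 1) / eta))).
    - destruct HT as [HT|<-]; [left; apply exp_increasing; lra|right; reflexivity].
    - rewrite exp_Ropp, exp_ln by (apply Rdiv_lt_0_compat; lra). field. lra. }
  assert (0 < exp (- T)) by apply exp_pos.
  apply Rle_lt_trans with (K' * (eta / (K' + 1))).
  - apply Rle_trans with (K' * exp (- T)); [nra|]. apply Rmult_le_compat_l; lra.
  - apply Rmult_lt_reg_r with (K' + 1); [lra|]. field_simplify; [|lra]. nra.
Qed.

Lemma improper_integral_antiderivative (f Fa : R -> R) a L K T0 :
  (forall t, is_derive Fa t (f t)) -> (forall t, continuous f t) ->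
  (forall T, T0 <= T -> Rabs (Fa T - L) <= K * exp (- T)) ->
  improper_integral f a = L - Fa a.
Proof.
  intros Hd Hc Hdecay.
  assert (HL : has_improper_integral f a (L - Fa a)).
  { intros eta Heta. destruct (exp_neg_eventually_lt K eta Heta) as [M HM].
    exists (Rmax M T0). intros T HT HaT.
    assert (Hex : ex_RInt f a T)
      by (apply (@ex_RInt_continuous R_CompleteNormedModule); intros; apply Hc).
    exists (ex_RInt_Reals_0 _ _ _ Hex). rewrite <- RInt_Reals.
    assert (Hftc : RInt f a T = Fa T - Fa a).
    { apply is_RInt_unique, (@is_RInt_derive R_CompleteNormedModule); intros;
        [apply Hd|apply Hc]. }
    rewrite Hftc. replace (Fa T - Fa a - (L - Fa a)) with (Fa T - L) by ring.
    apply Rle_lt_trans with (K * exp (- T)).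
    - apply Hdecay. eapply Rle_trans; [apply Rmax_r|exact HT].
    - apply HM. eapply Rle_trans; [apply Rmax_l|exact HT]. }
  apply (has_improper_integral_unique f a); [|exact HL].
  exact (epsilon_spec (inhabits 0) (fun v => has_improper_integral f a v) (ex_intro _ _ HL)).
Qed.

Lemma continuous_lt_near (f : R -> R) x0 c :
  continuous f x0 -> f x0 < c -> exists e, 0 < e /\ forall x, Rabs (x - x0) < e -> f x < c.
Proof.
  intros Hf Hlt. apply continuity_pt_filterlim in Hf.
  destruct (Hf (c - f x0)) as [e [He Hx]]; [lra|]. exists e. split; [exact He|].
  intros x Hxx. destruct (Req_dec x x0) as [->|Hne]; [lra|].
  assert (Hd : R_dist (f x) (f x0) < c - f x0) by (apply Hx; repeat split; auto).
  unfold R_dist in Hd. apply Rabs_def2 in Hd. lra.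
Qed.

Definition generator_entry (Q : gen) (k j : state) : R :=
  match k, j with
  | st1, st1 => - ga Q | st1, st2 => ga Q | st2, st1 => gb Q | st2, st2 => - gb Q
  end.

Lemma trans_at_0 Q i j :
  trans Q i j 0 = match i, j with st1, st1 | st2, st2 => 1 | _, _ => 0 end.
Proof.
  unfold trans. destruct (Req_EM_T _ 0); [destruct i, j; reflexivity|].
  rewrite Rmult_0_r, Ropp_0, exp_0. destruct i, j; field; auto.
Qed.

Lemma trans_row_sum Q i t : trans Q i st1 t + trans Q i st2 t = 1.
Proof.
  unfold trans. destruct (Req_EM_T _ 0); destruct i; try ring; field; auto.
Qed.

Lemma trans_ge0 Q i j t : admissible Q -> 0 <= t -> 0 <= trans Q i j t.
Proof.
  destruct Q as [a b]. unfold admissible, trans. simpl. intros [Ha Hb] Ht.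
  destruct (Req_EM_T (a + b) 0) as [|Hs]; [destruct i, j; lra|].
  assert (E1 : exp (- ((a + b) * t)) <= 1).
  { rewrite <- exp_0. destruct (Req_dec t 0) as [->|].
    - right; f_equal; ring.
    - left; apply exp_increasing; nra. }
  assert (0 < exp (- ((a + b) * t))) by apply exp_pos.
  assert (0 <= a / (a + b)) by (apply Rdiv_le_0_compat; lra).
  assert (0 <= b / (a + b)) by (apply Rdiv_le_0_compat; lra).
  destruct i, j; nra.
Qed.

Lemma trans_diag_pos Q i t : admissible Q -> 0 < trans Q i i t.
Proof.
  destruct Q as [a b]. unfold admissible, trans. simpl. intros [Ha Hb].
  destruct (Req_EM_T (a + b) 0) as [|Hs]; [destruct i; lra|].
  pose proof (exp_pos (- ((a + b) * t))).
  assert (0 <= a / (a + b)) by (apply Rdiv_le_0_compat; lra).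
  assert (0 <= b / (a + b)) by (apply Rdiv_le_0_compat; lra).
  assert (Hsum : a / (a + b) + b / (a + b) = 1) by (field; exact Hs).
  destruct i; destruct (Rle_lt_dec (a / (a + b)) 0); nra.
Qed.

Lemma trans_forward Q i j t : admissible Q ->
  is_derive (trans Q i j) t
    (trans Q i st1 t * generator_entry Q st1 j + trans Q i st2 t * generator_entry Q st2 j).
Proof.
  destruct Q as [a b]. unfold admissible, trans, generator_entry. simpl. intros [Ha Hb].
  destruct (Req_EM_T (a + b) 0) as [|Hs].
  - assert (a = 0) by lra. assert (b = 0) by lra. subst.
    destruct i, j; simpl; auto_derive; try easy; ring.
  - destruct i, j; simpl; auto_derive; try easy; field; lra.
Qed.

Lemma exp_neg_double_le t : 0 <= t -> exp (- (2 * t)) <= exp (- t).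
Proof.
  intros [Ht|<-]; [left; apply exp_increasing; lra|right; f_equal; ring].
Qed.

Lemma delta13_pos t : 0 < delta13 t.
Proof. unfold delta13. pose proof (exp_pos (- t)). pose proof (exp_pos (- (2 * t))). lra. Qed.

(* [delta_tail e] is the integral of [delta13] over [e, oo), and [delta_tail_disc s e]
   that of [t |-> delta13 t * exp (- s (t - e))]. *)
Definition delta_tail (e : R) : R := / 2 * exp (- e) + / 4 * exp (- (2 * e)).

Definition delta_tail_disc (s e : R) : R :=
  / 2 * exp (- e) / (1 + s) + / 2 * exp (- (2 * e)) / (2 + s).

Definition disc_weight (s : R) : R := / 2 * (/ (1 + s) + / (2 + s)).

Lemma delta_tail_disc_at_0 s : 0 <= s -> delta_tail_disc s 0 = disc_weight s.
Proof.
  intros. unfold delta_tail_disc, disc_weight. rewrite Rmult_0_r, Ropp_0, exp_0. field. lra.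
Qed.

Section ContinuationValue.

Variables (g1 g2 : R -> R) (A B : R).
Hypothesis AB_pos : 0 < A + B.

Definition stationary_payoff : R := (B * g1 A + A * g2 B) / (A + B).

Definition deviation_coef (k : state) : R :=
  match k with st1 => - (A / (A + B)) | st2 => B / (A + B) end.

(* The payoff collected over [t, oo) by the chain with generator (A,B) started in k at time e. *)
Definition cont_value_from (e : R) (k : state) (t : R) : R :=
  stationary_payoff * delta_tail t
  + deviation_coef k * (g2 B - g1 A) * exp (- ((A + B) * (t - e))) * delta_tail_disc (A + B) t.

Definition cont_value (k : state) (e : R) : R := cont_value_from e k e.

Lemma cont_value_eq k e :
  cont_value k e
  = stationary_payoff * delta_tail e + deviation_coef k * (g2 B - g1 A) * delta_tail_disc (A + B) e.
Proof.
  unfold cont_value, cont_value_from. replace (e - e) with 0 by ring.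
  rewrite Rmult_0_r, Ropp_0, exp_0. ring.
Qed.

Lemma cont_value_sub e :
  cont_value st2 e - cont_value st1 e = (g2 B - g1 A) * delta_tail_disc (A + B) e.
Proof. rewrite !cont_value_eq. unfold deviation_coef. field. lra. Qed.

Lemma cont_value_derive k e :
  is_derive (cont_value k) e
   (match k with
    | st1 => - (delta13 e * g1 A) - A * (cont_value st2 e - cont_value st1 e)
    | st2 => - (delta13 e * g2 B) - B * (cont_value st1 e - cont_value st2 e)
    end).
Proof.
  apply (is_derive_ext (fun e => stationary_payoff * delta_tail e
          + deviation_coef k * (g2 B - g1 A) * delta_tail_disc (A + B) e));
    [intro; symmetry; apply cont_value_eq|].
  rewrite !cont_value_eq.
  unfold stationary_payoff, deviation_coef, delta_tail, delta_tail_disc, delta13.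
  destruct k; auto_derive; try easy; field; lra.
Qed.

Lemma cont_value_from_bound e k T : 0 <= T -> e <= T ->
  Rabs (cont_value_from e k T)
  <= (Rabs stationary_payoff + Rabs (deviation_coef k * (g2 B - g1 A))) * exp (- T).
Proof.
  intros HT HeT. unfold cont_value_from.
  set (E := exp (- ((A + B) * (T - e)))).
  assert (HE : 0 < E <= 1).
  { split; [apply exp_pos|]. unfold E. rewrite <- exp_0. destruct (Req_dec T e) as [->|].
    - right. f_equal. ring.
    - left. apply exp_increasing. nra. }
  pose proof (exp_neg_double_le T HT). pose proof (exp_pos (- T)).
  pose proof (exp_pos (- (2 * T))).
  assert (Htail : 0 <= delta_tail T <= exp (- T)) by (unfold delta_tail; split; lra).
  assert (Hdisc : 0 <= delta_tail_disc (A + B) T <= exp (- T)).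
  { unfold delta_tail_disc, Rdiv.
    assert (0 < / (1 + (A + B)) <= 1).
    { split; [apply Rinv_0_lt_compat; lra|rewrite <- Rinv_1; apply Rinv_le_contravar; lra]. }
    assert (0 < / (2 + (A + B)) <= 1).
    { split; [apply Rinv_0_lt_compat; lra|rewrite <- Rinv_1; apply Rinv_le_contravar; lra]. }
    split; nra. }
  set (p := stationary_payoff). set (c := deviation_coef k * (g2 B - g1 A)).
  eapply Rle_trans; [apply Rabs_triang|]. rewrite !Rabs_mult.
  rewrite (Rabs_pos_eq (delta_tail T)), (Rabs_pos_eq E), (Rabs_pos_eq (delta_tail_disc _ _))
    by lra.
  pose proof (Rabs_pos p). pose proof (Rabs_pos c).
  assert (E * delta_tail_disc (A + B) T <= exp (- T)) by nra.
  nra.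
Qed.

Lemma continuation_payoff x1 x2 e :
  improper_integral (fun t =>
    (x1 * trans (mkGen A B) st1 st1 (t - e) + x2 * trans (mkGen A B) st2 st1 (t - e))
      * payoff delta13 g1 g2 (mkGen A B) st1 t
  + (x1 * trans (mkGen A B) st1 st2 (t - e) + x2 * trans (mkGen A B) st2 st2 (t - e))
      * payoff delta13 g1 g2 (mkGen A B) st2 t) e
  = x1 * cont_value st1 e + x2 * cont_value st2 e.
Proof.
  set (Fa := fun t => - (x1 * cont_value_from e st1 t + x2 * cont_value_from e st2 t)).
  assert (HFa : forall t, is_derive Fa t
    ((x1 * trans (mkGen A B) st1 st1 (t - e) + x2 * trans (mkGen A B) st2 st1 (t - e))
       * payoff delta13 g1 g2 (mkGen A B) st1 t
     + (x1 * trans (mkGen A B) st1 st2 (t - e) + x2 * trans (mkGen A B) st2 st2 (t - e))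
       * payoff delta13 g1 g2 (mkGen A B) st2 t)).
  { intro t. unfold Fa, cont_value_from, stationary_payoff, deviation_coef, delta_tail,
      delta_tail_disc, trans, payoff, delta13; simpl.
    destruct (Req_EM_T (A + B) 0); [lra|].
    auto_derive; [easy|]. replace (t + - e) with (t - e) by ring. field. lra. }
  erewrite (improper_integral_antiderivative _ Fa e 0
    (Rabs x1 * (Rabs stationary_payoff + Rabs (deviation_coef st1 * (g2 B - g1 A)))
     + Rabs x2 * (Rabs stationary_payoff + Rabs (deviation_coef st2 * (g2 B - g1 A))))
    (Rmax e 0)); [| exact HFa | |].
  - unfold Fa, cont_value. ring.
  - intro t. apply (@ex_derive_continuous R_AbsRing R_NormedModule).
    unfold trans, payoff, delta13; simpl. destruct (Req_EM_T (A + B) 0); [lra|].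
    auto_derive. easy.
  - intros T HT. rewrite Rminus_0_r. unfold Fa. rewrite Rabs_Ropp.
    assert (HT0 : 0 <= T) by (eapply Rle_trans; [apply Rmax_r|exact HT]).
    assert (HeT : e <= T) by (eapply Rle_trans; [apply Rmax_l|exact HT]).
    pose proof (Rmult_le_compat_l _ _ _ (Rabs_pos x1) (cont_value_from_bound e st1 T HT0 HeT)).
    pose proof (Rmult_le_compat_l _ _ _ (Rabs_pos x2) (cont_value_from_bound e st2 T HT0 HeT)).
    eapply Rle_trans; [apply Rabs_triang|]. rewrite (Rabs_mult x1), (Rabs_mult x2). lra.
Qed.

Lemma F_cont_value i : F delta13 g1 g2 i (mkGen A B) = cont_value i 0.
Proof.
  set (x1 := match i with st1 => 1 | st2 => 0 end).
  set (x2 := match i with st1 => 0 | st2 => 1 end).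
  transitivity (x1 * cont_value st1 0 + x2 * cont_value st2 0);
    [|unfold x1, x2; destruct i; ring].
  rewrite <- continuation_payoff. unfold F. f_equal.
  apply functional_extensionality. intro t. rewrite Rminus_0_r. unfold x1, x2. destruct i; ring.
Qed.

End ContinuationValue.

Section Deviation.

Variables (g1 g2 : R -> R) (Q : gen) (A B : R).
Hypothesis Q_adm : admissible Q.
Hypothesis AB_pos : 0 < A + B.

Definition running_payoff (i : state) (t : R) : R :=
  trans Q i st1 t * payoff delta13 g1 g2 Q st1 t + trans Q i st2 t * payoff delta13 g1 g2 Q st2 t.

Definition deviation_gain (i : state) (e : R) : R :=
  RInt (running_payoff i) 0 e
  + trans Q i st1 e * cont_value g1 g2 A B st1 e + trans Q i st2 e * cont_value g1 g2 A B st2 e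
  - cont_value g1 g2 A B i 0.

Definition gain_rate (k : state) (e : R) : R :=
  match k with
  | st1 => delta13 e * (g1 (ga Q) - g1 A)
           + (ga Q - A) * (cont_value g1 g2 A B st2 e - cont_value g1 g2 A B st1 e)
  | st2 => delta13 e * (g2 (gb Q) - g2 B)
           - (gb Q - B) * (cont_value g1 g2 A B st2 e - cont_value g1 g2 A B st1 e)
  end.

Lemma running_payoff_continuous i t : continuous (running_payoff i) t.
Proof.
  apply (@ex_derive_continuous R_AbsRing R_NormedModule).
  unfold running_payoff, payoff, delta13.
  auto_derive. repeat split; eexists; apply trans_forward; exact Q_adm.
Qed.

Lemma Fconcat_sub_F i e :
  Fconcat delta13 g1 g2 i Q e (mkGen A B) - F delta13 g1 g2 i (mkGen A B) = deviation_gain i e.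
Proof.
  unfold Fconcat. rewrite continuation_payoff, F_cont_value by exact AB_pos.
  unfold deviation_gain. rewrite integral_RInt by apply running_payoff_continuous.
  unfold running_payoff. ring.
Qed.

Lemma deviation_gain_at_0 i : deviation_gain i 0 = 0.
Proof.
  unfold deviation_gain. rewrite RInt_point, !trans_at_0.
  destruct i; simpl; unfold zero; simpl; ring.
Qed.

Lemma deviation_gain_derive i e :
  is_derive (deviation_gain i) e
    (trans Q i st1 e * gain_rate st1 e + trans Q i st2 e * gain_rate st2 e).
Proof.
  set (W1 := cont_value g1 g2 A B st1). set (W2 := cont_value g1 g2 A B st2).
  assert (H1 := trans_forward Q i st1 e Q_adm).
  assert (H2 := trans_forward Q i st2 e Q_adm).
  assert (HW1 := cont_value_derive g1 g2 A B AB_pos st1 e). fold W1 W2 in HW1.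
  assert (HW2 := cont_value_derive g1 g2 A B AB_pos st2 e). fold W1 W2 in HW2.
  unfold deviation_gain. fold W1 W2.
  auto_derive.
  - repeat split; try (eexists; eassumption).
    + apply (@ex_RInt_continuous R_CompleteNormedModule). intros.
      apply running_payoff_continuous.
    + apply filter_forall. intro x. apply continuity_pt_filterlim, running_payoff_continuous.
  - rewrite (is_derive_unique (fun x : R => trans Q i st1 x) _ _ H1),
      (is_derive_unique (fun x : R => trans Q i st2 x) _ _ H2),
      (is_derive_unique (fun x : R => W1 x) _ _ HW1),
      (is_derive_unique (fun x : R => W2 x) _ _ HW2).
    unfold gain_rate, running_payoff, payoff, generator_entry. fold (W1 e) (W2 e). ring.
Qed.

Lemma deviation_gain_mean_value i eps : 0 < eps ->
  exists x, 0 < x < eps /\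
    deviation_gain i eps
    = eps * (trans Q i st1 x * gain_rate st1 x + trans Q i st2 x * gain_rate st2 x).
Proof.
  intros Heps.
  destruct (MVT_cor2 (deviation_gain i)
              (fun x => trans Q i st1 x * gain_rate st1 x + trans Q i st2 x * gain_rate st2 x)
              0 eps Heps) as [x [Hx Hrange]].
  { intros x _. apply is_derive_Reals, deviation_gain_derive. }
  exists x. split; [exact Hrange|]. rewrite deviation_gain_at_0 in Hx. lra.
Qed.

Lemma Fconcat_sub_F_le i eps c : 0 < eps ->
  (forall x, 0 < x < eps -> gain_rate st1 x <= c /\ gain_rate st2 x <= c) ->
  Fconcat delta13 g1 g2 i Q eps (mkGen A B) - F delta13 g1 g2 i (mkGen A B) <= c * eps.
Proof.
  intros Heps Hgain. rewrite Fconcat_sub_F.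
  destruct (deviation_gain_mean_value i eps Heps) as [x [Hx ->]].
  destruct (Hgain x Hx) as [G1 G2].
  pose proof (trans_row_sum Q i x).
  pose proof (trans_ge0 Q i st1 x Q_adm (Rlt_le _ _ (proj1 Hx))).
  pose proof (trans_ge0 Q i st2 x Q_adm (Rlt_le _ _ (proj1 Hx))).
  assert (trans Q i st1 x * gain_rate st1 x + trans Q i st2 x * gain_rate st2 x <= c) by nra.
  nra.
Qed.

Lemma gain_rate_continuous k x : continuous (gain_rate k) x.
Proof.
  apply (@ex_derive_continuous R_AbsRing R_NormedModule).
  unfold gain_rate, cont_value, cont_value_from, stationary_payoff, deviation_coef, delta_tail,
    delta_tail_disc, delta13.
  destruct k; auto_derive; repeat split; lra.
Qed.

Lemma gain_rate_at_0 k :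
  gain_rate k 0 =
  match k with
  | st1 => g1 (ga Q) - g1 A + (ga Q - A) * (g2 B - g1 A) * disc_weight (A + B)
  | st2 => g2 (gb Q) - g2 B - (gb Q - B) * (g2 B - g1 A) * disc_weight (A + B)
  end.
Proof.
  assert (Hdelta : delta13 0 = 1) by (unfold delta13; rewrite Rmult_0_r, Ropp_0, exp_0; field).
  unfold gain_rate. rewrite cont_value_sub, delta_tail_disc_at_0, Hdelta by lra.
  destruct k; ring.
Qed.

End Deviation.

Lemma weak_equilibrium_of_gain_rates_at_0 g1 g2 A B :
  0 <= A -> 0 <= B -> 0 < A + B ->
  (forall Q, admissible Q ->
     gain_rate g1 g2 Q A B st1 0 <= 0 /\ gain_rate g1 g2 Q A B st2 0 <= 0) ->
  weak_equilibrium delta13 g1 g2 (mkGen A B).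
Proof.
  intros HA HB HAB Hgain. split; [split; assumption|].
  intros Q i HQ eta Heta. destruct (Hgain Q HQ) as [G1 G2].
  destruct (continuous_lt_near _ 0 eta (gain_rate_continuous g1 g2 Q A B st1 0))
    as [e1 [He1 H1]]; [lra|].
  destruct (continuous_lt_near _ 0 eta (gain_rate_continuous g1 g2 Q A B st2 0))
    as [e2 [He2 H2]]; [lra|].
  exists (Rmin e1 e2). split; [apply Rmin_glb_lt; assumption|].
  intros eps [Heps Hepse].
  assert (Hle : Fconcat delta13 g1 g2 i Q eps (mkGen A B) - F delta13 g1 g2 i (mkGen A B)
                <= eta * eps).
  { apply Fconcat_sub_F_le; [exact HQ|exact HAB|exact Heps|].
    intros x Hx. pose proof (Rmin_l e1 e2). pose proof (Rmin_r e1 e2).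
    split; left; [apply H1|apply H2]; rewrite Rminus_0_r, Rabs_pos_eq; lra. }
  apply Rle_ge. unfold Rdiv. apply Rmult_le_reg_r with eps; [exact Heps|].
  rewrite Rmult_assoc, Rinv_l by lra. lra.
Qed.

Lemma strong_equilibrium_of_gain_rates_near_0 g1 g2 A B :
  0 <= A -> 0 <= B -> 0 < A + B ->
  (forall Q, admissible Q -> exists e, 0 < e /\
     forall x, 0 < x < e -> gain_rate g1 g2 Q A B st1 x <= 0 /\ gain_rate g1 g2 Q A B st2 x <= 0) ->
  strong_equilibrium delta13 g1 g2 (mkGen A B).
Proof.
  intros HA HB HAB Hgain. split; [split; assumption|].
  intros Q i HQ. destruct (Hgain Q HQ) as [e [He Hle]].
  exists e. split; [exact He|]. intros eps [Heps Hepse].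
  assert (Fconcat delta13 g1 g2 i Q eps (mkGen A B) - F delta13 g1 g2 i (mkGen A B) <= 0 * eps).
  { apply Fconcat_sub_F_le; [exact HQ|exact HAB|exact Heps|].
    intros x Hx. apply Hle. lra. }
  lra.
Qed.

Lemma g2_13_lin b : b < 7 / 12 -> g2_13 b = 193 / 144 + 5 / 6 * b.
Proof. intros. unfold g2_13. destruct (Rlt_dec b (7 / 12)); [reflexivity|lra]. Qed.

Lemma g2_13_at_7_12 : g2_13 (7 / 12) = 263 / 144.
Proof. unfold g2_13. destruct (Rlt_dec (7 / 12) (7 / 12)); [lra|]. field. Qed.

Lemma g2_13_le_tangent b : g2_13 b <= 193 / 144 + 5 / 6 * b.
Proof. unfold g2_13. destruct (Rlt_dec b (7 / 12)); [lra|]. nra. Qed.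

Lemma gain_rates_at_0_13 Q :
  gain_rate g1_13 g2_13 Q (5 / 12) (7 / 12) st1 0 <= 0
  /\ gain_rate g1_13 g2_13 Q (5 / 12) (7 / 12) st2 0 <= 0.
Proof.
  assert (Hw : disc_weight (5 / 12 + 7 / 12) = 5 / 12) by (unfold disc_weight; field).
  rewrite !gain_rate_at_0, Hw, g2_13_at_7_12 by lra. unfold g1_13.
  pose proof (g2_13_le_tangent (gb Q)). pose proof (pow2_ge_0 (ga Q - 5 / 12)).
  split; nra.
Qed.

Lemma gain_rates_lowered_b b x : b < 7 / 12 ->
  gain_rate g1_13 g2_13 (mkGen (5 / 12) b) (5 / 12) (7 / 12) st1 x = 0
  /\ gain_rate g1_13 g2_13 (mkGen (5 / 12) b) (5 / 12) (7 / 12) st2 x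
     = (7 / 12 - b) / 12 * (exp (- x) - exp (- (2 * x))).
Proof.
  intros Hb. unfold gain_rate. simpl. split; [ring|].
  rewrite cont_value_sub, g2_13_lin, g2_13_at_7_12 by lra.
  unfold g1_13, delta_tail_disc, delta13. field.
Qed.

Lemma F_lt_Fconcat_lowered_b b eps : 0 <= b < 7 / 12 -> 0 < eps ->
  F delta13 g1_13 g2_13 st2 (mkGen (5 / 12) (7 / 12))
  < Fconcat delta13 g1_13 g2_13 st2 (mkGen (5 / 12) b) eps (mkGen (5 / 12) (7 / 12)).
Proof.
  intros Hb Heps.
  assert (HQ : admissible (mkGen (5 / 12) b)) by (split; simpl; lra).
  pose proof (Fconcat_sub_F g1_13 g2_13 (mkGen (5 / 12) b) (5 / 12) (7 / 12) HQ
                ltac:(lra) st2 eps) as Hsub.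
  destruct (deviation_gain_mean_value g1_13 g2_13 (mkGen (5 / 12) b) (5 / 12) (7 / 12) HQ
              ltac:(lra) st2 eps Heps) as [x [Hx Hmv]].
  destruct (gain_rates_lowered_b b x (proj2 Hb)) as [G1 G2]. rewrite G1, G2 in Hmv.
  pose proof (trans_diag_pos (mkGen (5 / 12) b) st2 x HQ).
  assert (exp (- (2 * x)) < exp (- x)) by (apply exp_increasing; lra).
  assert (0 < (7 / 12 - b) / 12 * (exp (- x) - exp (- (2 * x)))) by
    (apply Rmult_lt_0_compat; lra).
  assert (0 < eps * (trans (mkGen (5 / 12) b) st2 st2 x
                     * ((7 / 12 - b) / 12 * (exp (- x) - exp (- (2 * x))))))
    by (apply Rmult_lt_0_compat; [lra|apply Rmult_lt_0_compat; lra]).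
  lra.
Qed.

Definition abar_poly (a : R) : R := 2 * a ^ 3 + 9 * a ^ 2 + (8 - 386 / 144) * a - 579 / 144.

Lemma abar_poly_factor a : 0 <= a ->
  abar_poly a = (2 * a - disc_weight a * (a ^ 2 + 193 / 144)) * (2 * (1 + a) * (2 + a)).
Proof. intros. unfold abar_poly, disc_weight. field. lra. Qed.

Lemma abar_equation_iff a : 0 <= a ->
  2 * a = disc_weight a * (a ^ 2 + 193 / 144) <-> abar_poly a = 0.
Proof.
  intros Ha. rewrite abar_poly_factor by exact Ha.
  assert (Hpos : 0 < 2 * (1 + a) * (2 + a)) by (apply Rmult_lt_0_compat; lra).
  split; intro Heq; [rewrite Heq; ring|].
  apply Rmult_integral in Heq. lra.
Qed.

Lemma abar_poly_increasing a c : 0 <= a -> a < c -> abar_poly a < abar_poly c.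
Proof.
  intros Ha Hac. unfold abar_poly.
  assert (0 < (c - a) * (2 * (a * a + a * c + c * c) + 9 * (a + c) + (8 - 386 / 144)))
    by (apply Rmult_lt_0_compat; nra).
  nra.
Qed.

Lemma abar_poly_root : exists z, 5 / 12 <= z /\ abar_poly z = 0.
Proof.
  assert (Hcont : continuity abar_poly).
  { intro x. apply continuity_pt_filterlim, (@ex_derive_continuous R_AbsRing R_NormedModule).
    unfold abar_poly. auto_derive. easy. }
  destruct (IVT abar_poly (5 / 12) 1 Hcont) as [z [Hz Hroot]];
    [lra|unfold abar_poly; lra|unfold abar_poly; lra|].
  exists z. split; [lra|exact Hroot].
Qed.

Lemma abar_poly_injective a c : 0 <= a -> 0 <= c -> abar_poly a = abar_poly c -> a = c.
Proof.
  intros Ha Hc Hac. destruct (Rtotal_order a c) as [Hlt|[Heq|Hgt]]; [|exact Heq|].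
  - pose proof (abar_poly_increasing a c Ha Hlt). lra.
  - pose proof (abar_poly_increasing c a Hc Hgt). lra.
Qed.

(* Chebyshev's sum inequality: [u X + w Y >= (u + w) (X + Y) / 2] for [u >= w], [X >= Y]. *)
Lemma abar_discounted_cost_ge z x : 0 <= z -> 5 / 6 <= 2 * z ->
  2 * z = disc_weight z * (z ^ 2 + 193 / 144) -> 0 <= x ->
  5 / 6 * delta13 x <= (g2_13 0 - g1_13 z) * delta_tail_disc z x.
Proof.
  intros Hz Hz2 Heq Hx.
  rewrite g2_13_lin by lra. unfold g1_13, delta_tail_disc, delta13.
  set (X := exp (- x)). set (Y := exp (- (2 * x))).
  assert (HXY : Y <= X) by (apply exp_neg_double_le; exact Hx).
  set (u := (z ^ 2 + 193 / 144) / (2 * (1 + z))).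
  set (w := (z ^ 2 + 193 / 144) / (2 * (2 + z))).
  assert (Huw : u + w = 2 * z) by (rewrite Heq; unfold u, w, disc_weight; field; lra).
  assert (Hwu : w <= u).
  { unfold u, w, Rdiv. apply Rmult_le_compat_l; [nra|]. apply Rinv_le_contravar; lra. }
  replace ((193 / 144 + 5 / 6 * 0 - - z ^ 2) * (/ 2 * X / (1 + z) + / 2 * Y / (2 + z)))
    with (u * X + w * Y) by (unfold u, w; field; lra).
  assert (0 < Y) by apply exp_pos.
  assert (0 <= (u - w) * (X - Y)) by (apply Rmult_le_pos; lra).
  nra.
Qed.

Section AbarEquilibrium.

Variable z : R.
Hypothesis z_ge : 5 / 12 <= z.
Hypothesis z_eq : 2 * z = disc_weight z * (z ^ 2 + 193 / 144).

Lemma gain_rate_abar_st2_le0 Q x : admissible Q -> 0 <= x ->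
  gain_rate g1_13 g2_13 Q z 0 st2 x <= 0.
Proof.
  intros [_ Hb] Hx. unfold gain_rate. rewrite cont_value_sub, Rplus_0_r by lra.
  pose proof (abar_discounted_cost_ge z x ltac:(lra) ltac:(lra) z_eq Hx).
  pose proof (g2_13_le_tangent (gb Q)). pose proof (delta13_pos x).
  rewrite (g2_13_lin 0) in * by lra.
  set (K := (g2_13 0 - g1_13 z) * delta_tail_disc z x) in *.
  nra.
Qed.

Lemma gain_rate_abar_st1_at_0 Q :
  gain_rate g1_13 g2_13 Q z 0 st1 0 = - (ga Q - z) ^ 2.
Proof.
  rewrite gain_rate_at_0, Rplus_0_r by lra. rewrite g2_13_lin by lra. unfold g1_13.
  rewrite Rmult_assoc.
  replace ((193 / 144 + 5 / 6 * 0 - - z ^ 2) * disc_weight z) with (2 * z) by (rewrite z_eq; ring).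
  ring.
Qed.

Lemma gain_rate_abar_st1_near_0 Q :
  exists e, 0 < e /\ forall x, 0 < x < e -> gain_rate g1_13 g2_13 Q z 0 st1 x <= 0.
Proof.
  destruct (Req_dec (ga Q) z) as [Ea|Ea].
  - exists 1. split; [lra|]. intros x _. unfold gain_rate. rewrite Ea. right. ring.
  - assert (Hneg : gain_rate g1_13 g2_13 Q z 0 st1 0 < 0).
    { rewrite gain_rate_abar_st1_at_0.
      assert (0 < (ga Q - z) ^ 2) by (apply pow2_gt_0; lra).
      lra. }
    destruct (continuous_lt_near _ 0 0 (gain_rate_continuous g1_13 g2_13 Q z 0 st1 0) Hneg)
      as [e [He Hnear]].
    exists e. split; [exact He|]. intros x Hx. left. apply Hnear.
    rewrite Rminus_0_r, Rabs_pos_eq; lra.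
Qed.

Lemma strong_equilibrium_abar : strong_equilibrium delta13 g1_13 g2_13 (mkGen z 0).
Proof.
  apply strong_equilibrium_of_gain_rates_near_0; try lra.
  intros Q HQ. destruct (gain_rate_abar_st1_near_0 Q) as [e [He H1]].
  exists e. split; [exact He|]. intros x Hx. split; [apply H1, Hx|].
  apply gain_rate_abar_st2_le0; [exact HQ|lra].
Qed.

End AbarEquilibrium.

Theorem mainTheorem13 :
  (* (i) *)
  (weak_equilibrium delta13 g1_13 g2_13 (mkGen (5 / 12) (7 / 12))
   /\ ~ strong_equilibrium delta13 g1_13 g2_13 (mkGen (5 / 12) (7 / 12))
   /\ (forall b : R, 0 <= b < 7 / 12 ->
         exists e0, 0 < e0 /\ forall eps, 0 < eps < e0 ->
           F delta13 g1_13 g2_13 st2 (mkGen (5 / 12) (7 / 12))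
           < Fconcat delta13 g1_13 g2_13 st2 (mkGen (5 / 12) b) eps
               (mkGen (5 / 12) (7 / 12))))
  /\
  (* (ii) *)
  (exists abar : R,
     (0 <= abar /\
      2 * abar = / 2 * (/ (1 + abar) + / (2 + abar)) * (abar ^ 2 + 193 / 144))
     /\ (forall a : R, 0 <= a ->
           2 * a = / 2 * (/ (1 + a) + / (2 + a)) * (a ^ 2 + 193 / 144) ->
           a = abar)
     /\ 2 * abar >= 5 / 6
     /\ strong_equilibrium delta13 g1_13 g2_13 (mkGen abar 0)).
Proof.
  split; [split; [|split]|].
  - apply weak_equilibrium_of_gain_rates_at_0; [lra|lra|lra|].
    intros Q _. apply gain_rates_at_0_13.
  - intros [_ Hstrong].
    destruct (Hstrong (mkGen (5 / 12) 0) st2) as [e [He Hle]]; [split; simpl; lra|].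
    specialize (Hle e (conj He (Rle_refl e))).
    pose proof (F_lt_Fconcat_lowered_b 0 e ltac:(lra) He). lra.
  - intros b Hb. exists 1. split; [lra|].
    intros eps [Heps _]. exact (F_lt_Fconcat_lowered_b b eps Hb Heps).
  - destruct abar_poly_root as [z [Hz Hroot]].
    assert (Heq : 2 * z = disc_weight z * (z ^ 2 + 193 / 144))
      by (apply abar_equation_iff; [lra|exact Hroot]).
    exists z. split; [split; [lra|exact Heq]|]. split; [|split].
    + intros a Ha Hea. apply abar_poly_injective; [exact Ha|lra|].
      rewrite Hroot. apply abar_equation_iff; assumption.
    + lra.
    + exact (strong_equilibrium_abar z Hz Heq).
Qed.
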